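(* Let $S$ be an idempotent $\omega$-continuous semiring, $\mathcal X$ a finite set of variables, and $\vec x=\vec p=\vec f\oplus\vec a$ a system of polynomial equations, where $\vec a\in S^{\mathcal X}$ is the vector of constant parts and $\vec f=(f_x)_{x\in\mathcal X}$ consists of polynomials in which every monomial contains at least one variable. Let $\mu\vec p$ be the least solution of $\vec x=\vec p$. Let $M^{(0)}=\widehat{\vec f}$, $M^{(n+1)}=\mathrm{eval}_{M^{(n)}}(M^{(n)})$, and for $\vec b\in S^{\mathcal X}$ let $M^{(n)}_{\vec b}=\mathrm{eval}_{\vec b}(M^{(n)})$. Then: (1) for all $n\in\mathbb N$, $M^{(n)}_{\vec a}=N^{(2^n)}$; (2) if $\vec a\le\vec b\le\mu\vec p$, then $\sup_{n\in\mathbb N}M^{(n)}_{\vec b}=\mu\vec p$.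
   Context: Semiring notions: a semiring $(S,\oplus,\odot,0,1)$; natural order $a\le a\oplus b$ (componentwise on vectors); $\omega$-continuous: naturally ordered, chains have suprema, countable sums $\bigoplus_i a_i:=\sup_i(a_0\oplus\dots\oplus a_i)$ commute with $\odot$ on both sides and are invariant under partitioning; idempotent: $a\oplus a=a$. Monomials are words $a_1x_{i_1}\cdots a_lx_{i_l}a_{l+1}$ ($a_j\in S$, $x_{i_j}\in\mathcal X$), polynomials finite sums of monomials, interpreted as functions $S^{\mathcal X}\to S$; functions and vectors of functions form semirings with pointwise operations. $\mathrm{eval}_{\vec v}(g)$ is the composition $g\circ\vec v$ (or the value $g(\vec v)$ if $\vec v$ is a vector of constants), applied componentwise to vectors. A solution is $\vec v\in S^{\mathcal X}$ with $\vec v=\mathrm{eval}_{\vec v}(\vec p)$. Linear completion: a substitution $\{x\mapsto g\}$ applied to a polynomial $h$ yields the set $h\{x\mapsto g\}$ of polynomials obtained by replacing exactly one occurrence of $x$ in $h$ by $g$. Linear polynomial substitutions for $x$ are $\{x\mapsto x\}$ or $\{x\mapsto g\}$ with $g\in f_x\sigma_y$ for some variable $y$ and some linear polynomial substitution $\sigma_y$ for $y$ (mutual induction). $\widehat{\vec f}$ has components $\widehat{f_x}=\bigoplus_{\sigma_x}x\sigma_x$ where $x\{x\mapsto g\}=g$, summing over all linear polynomial substitutions for $x$. Newton iteration: for a polynomial $q$, a variable $y$ and $\vec v\in S^{\mathcal X}$, the differential $D_y q|_{\vec v}$ is defined by: $D_y(\bigoplus_i m_i)|_{\vec v}=\bigoplus_i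 D_y m_i|_{\vec v}$; $D_y(g\odot h)|_{\vec v}=(D_y g|_{\vec v}\odot\mathrm{eval}_{\vec v}(h))\oplus(\mathrm{eval}_{\vec v}(g)\odot D_y h|_{\vec v})$; $D_y q|_{\vec v}=0$ if $q\in S$ or $q$ is a variable other than $y$; $D_y y|_{\vec v}=y$. Further $Dq|_{\vec v}=\bigoplus_{y\in\mathcal X}D_yq|_{\vec v}$, componentwise on vectors, and $D\vec p|_{\vec v}^{*}=\bigoplus_{i\in\mathbb N}(D\vec p|_{\vec v})^i$ with $(D\vec p|_{\vec v})^0=\mathrm{id}$ and $(D\vec p|_{\vec v})^{i+1}=\mathrm{eval}_{(D\vec p|_{\vec v})^i}(D\vec p|_{\vec v})$. The Newton sequence is $N^{(0)}=\mathrm{eval}_{\vec 0}(\vec p)$, $N^{(n+1)}=\mathrm{eval}_{N^{(n)}}\big(D\vec p|_{N^{(n)}}^{*}\big)$. *)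

From mathcomp Require Import all_boot all_order all_algebra.
From Stdlib Require Import ClassicalEpsilon.
Set Implicit Arguments.
Unset Strict Implicit.
Unset Printing Implicit Defensive.
Import GRing.Theory.
Local Open Scope ring_scope.

Definition nle (S : pzSemiRingType) (a b : S) : Prop := exists c, a + c = b.

Definition vle (S : pzSemiRingType) (X : Type) (u v : X -> S) : Prop :=
  forall x, nle (u x) (v x).

Definition is_chain (S : pzSemiRingType) (u : nat -> S) : Prop :=
  forall i, nle (u i) (u i.+1).

Definition is_lub (S : pzSemiRingType) (u : nat -> S) (s : S) : Prop :=
  (forall i, nle (u i) s) /\ (forall t, (forall i, nle (u i) t) -> nle s t).

Definition sup (S : pzSemiRingType) (u : nat -> S) : S :=
  epsilon (inhabits 0) (fun s => is_lub u s).

Definition csum (S : pzSemiRingType) (a : nat -> S) : S :=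
  sup (fun i => \sum_(k < i.+1) a k).

Definition idempotent_sr (S : pzSemiRingType) : Prop := forall a : S, a + a = a.

(* A partition of
   the index set N is given by a block map part : nat -> nat (block j is
   part^-1(j), possibly empty); the sum over a block is the countable sum with
   the summands outside the block replaced by 0. *)
Definition omega_continuous (S : pzSemiRingType) : Prop :=
  [/\ (forall a b : S, nle a b -> nle b a -> a = b),
      (forall u : nat -> S, is_chain u -> exists s, is_lub u s),
      (forall (c : S) (a : nat -> S), c * csum a = csum (fun i => c * a i)),
      (forall (c : S) (a : nat -> S), csum a * c = csum (fun i => a i * c)) &
      (forall (a : nat -> S) (part : nat -> nat),
          csum a = csum (fun j => csum (fun i => if part i == j then a i else 0)))].

(* a monomial is a word over constants and variables; a polynomial is a finite
   sum (list) of monomials *)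
Inductive letter (S X : Type) := LCst of S | LVar of X.
Arguments LCst {S X}.
Arguments LVar {S X}.
Definition smonomial (S X : Type) := seq (letter S X).
Definition spoly (S X : Type) := seq (smonomial S X).

Definition is_var (S X : Type) (l : letter S X) : bool :=
  if l is LVar _ then true else false.

Definition leval (S : pzSemiRingType) (X : Type) (l : letter S X) (v : X -> S) : S :=
  match l with LCst c => c | LVar x => v x end.

Fixpoint meval (S : pzSemiRingType) (X : Type) (m : smonomial S X) (v : X -> S) : S :=
  match m with [::] => 1 | l :: m' => leval l v * meval m' v end.

Definition peval (S : pzSemiRingType) (X : Type) (p : spoly S X) (v : X -> S) : S :=
  \sum_(m <- p) meval m v.

Definition pvar (S X : Type) (x : X) : spoly S X := [:: [:: LVar x]].

Definition psys (S : pzSemiRingType) (X : Type) (f : X -> spoly S X) (a : X -> S)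
  : X -> spoly S X := fun x => [:: LCst (a x)] :: f x.

Fixpoint repl_mon (S : Type) (X : eqType) (m : smonomial S X) (y : X) (g : spoly S X)
  : seq (spoly S X) :=
  match m with
  | [::] => [::]
  | l :: m' =>
      (if l is LVar z then (if z == y then [:: [seq m'' ++ m' | m'' <- g]] else [::])
       else [::])
      ++ [seq [seq l :: m'' | m'' <- q] | q <- repl_mon m' y g]
  end.

(* h{y |-> g}: all polynomials obtained by replacing exactly one occurrence of y
   in the polynomial h by g *)
Fixpoint repl_poly (S : Type) (X : eqType) (h : spoly S X) (y : X) (g : spoly S X)
  : seq (spoly S X) :=
  match h with
  | [::] => [::]
  | m :: h' => [seq q ++ h' | q <- repl_mon m y g]
               ++ [seq m :: r | r <- repl_poly h' y g]
  end.

(* lin_comp f k x: the polynomials x sigma_x for the linear polynomial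
   substitutions sigma_x for x obtainable with at most k nested steps of the
   mutual induction (every one of them occurs for some k) *)
Fixpoint lin_comp (S : Type) (X : finType) (f : X -> spoly S X) (k : nat) (x : X)
  : seq (spoly S X) :=
  match k with
  | 0 => [:: pvar S x]
  | k'.+1 => pvar S x ::
       flatten [seq flatten [seq repl_poly (f x) y g | g <- lin_comp f k' y]
               | y <- enum X]
  end.

(* \hat f_x = (+)_{sigma_x} x sigma_x, as a function S^X -> S (countable sum,
   duplicates being irrelevant by idempotence) *)
Definition fhat (S : pzSemiRingType) (X : finType) (f : X -> spoly S X)
  : X -> (X -> S) -> S :=
  fun x v => csum (fun k => \sum_(g <- lin_comp f k x) peval g v).

(* M^(0) = \hat f, M^(n+1) = eval_{M^(n)}(M^(n)) = M^(n) o M^(n) *)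
Fixpoint Mseq (S : pzSemiRingType) (X : finType) (f : X -> spoly S X) (n : nat)
  : X -> (X -> S) -> S :=
  match n with
  | 0 => fhat f
  | n'.+1 => let M := Mseq f n' in fun x w => M x (fun y => M y w)
  end.

(* differential D_y, as a function of the argument w (D_y y|_v = y, i.e. w |-> w y) *)
Definition Dlet (S : pzSemiRingType) (X : eqType) (y : X) (l : letter S X)
  : (X -> S) -> S :=
  fun w => match l with LCst _ => 0 | LVar z => if z == y then w y else 0 end.

Fixpoint Dmon (S : pzSemiRingType) (X : eqType) (y : X) (v : X -> S) (m : smonomial S X)
  : (X -> S) -> S :=
  match m with
  | [::] => fun _ => 0
  | l :: m' => fun w => Dlet y l w * meval m' v + leval l v * Dmon y v m' w
  end.

Definition Dypoly (S : pzSemiRingType) (X : eqType) (y : X) (v : X -> S) (q : spoly S X)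
  : (X -> S) -> S := fun w => \sum_(m <- q) Dmon y v m w.

Definition Dpoly (S : pzSemiRingType) (X : finType) (q : spoly S X) (v : X -> S)
  : (X -> S) -> S := fun w => \sum_(y : X) Dypoly y v q w.

Definition Dvec (S : pzSemiRingType) (X : finType) (p : X -> spoly S X) (v : X -> S)
  : X -> (X -> S) -> S := fun x => Dpoly (p x) v.

Fixpoint Dpow (S : pzSemiRingType) (X : finType) (p : X -> spoly S X) (v : X -> S) (i : nat)
  : X -> (X -> S) -> S :=
  match i with
  | 0 => fun x w => w x
  | i'.+1 => fun x w => Dvec p v x (fun y => Dpow p v i' y w)
  end.

Definition Dstar (S : pzSemiRingType) (X : finType) (p : X -> spoly S X) (v : X -> S)
  : X -> (X -> S) -> S := fun x w => csum (fun i => Dpow p v i x w).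

Fixpoint Newton (S : pzSemiRingType) (X : finType) (p : X -> spoly S X) (n : nat)
  : X -> S :=
  match n with
  | 0 => fun x => peval (p x) (fun _ => 0)
  | n'.+1 => let N := Newton p n' in fun x => Dstar p N x N
  end.

Definition is_solution (S : pzSemiRingType) (X : Type) (p : X -> spoly S X) (v : X -> S)
  : Prop := forall x, v x = peval (p x) v.

Definition least_solution (S : pzSemiRingType) (X : Type) (p : X -> spoly S X) (mu : X -> S)
  : Prop := is_solution p mu /\ (forall v, is_solution p v -> vle mu v).

(* In an idempotent semiring the natural order is a + b = b, countable sums are
   suprema of their terms, and replacing one occurrence of a variable y of h by
   g in all possible ways evaluates, at v, to D_y h|_v applied to g(v), up to a
   summand h(v).  Since every monomial of f contains a variable, that summand is
   already dominated by D f|_v (v), so the depth-k part of the linear completion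
   evaluates at v to the partial sum (+)_(i <= k) (D p|_v)^i (v).  Hence
   F(v) := \hat f(v) is one Newton step, F(v) = D p|_v^* (v); therefore
   M^(n) = F^(2^n) and N^(k) = F^k(a), which gives (1).
   For (2), F is monotone, inflationary, dominates f and maps mu below itself,
   so the Kleene iterates stay below F^k(b) <= mu; by omega-continuity their
   supremum is a solution, hence above mu. *)
From mathcomp Require Import all_boot all_order all_algebra.
From Stdlib Require Import ClassicalEpsilon FunctionalExtensionality.
Set Implicit Arguments.
Unset Strict Implicit.
Unset Printing Implicit Defensive.
Import GRing.Theory.
Local Open Scope ring_scope.

Section IdempotentSemiring.
Variable S : pzSemiRingType.
Hypothesis idem : idempotent_sr S.

Definition lee (a b : S) := a + b = b.

Lemma nleP a b : nle a b <-> lee a b.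
Proof.
split; last by move=> h; exists b.
by case=> c <-; rewrite /lee addrA idem.
Qed.

Lemma lee_refl a : lee a a. Proof. exact: idem. Qed.

Lemma lee_trans a b c : lee a b -> lee b c -> lee a c.
Proof. by rewrite /lee => h1 h2; rewrite -h2 addrA h1. Qed.

Lemma lee_anti a b : lee a b -> lee b a -> a = b.
Proof. by rewrite /lee => h1 h2; rewrite -h1 -{1}h2 addrC. Qed.

Lemma lee0 a : lee 0 a. Proof. by rewrite /lee add0r. Qed.

Lemma leeDl a b : lee a (a + b). Proof. by rewrite /lee addrA idem. Qed.

Lemma leeDr a b : lee b (a + b). Proof. by rewrite addrC; apply: leeDl. Qed.

Lemma leeD_lub a b c : lee a c -> lee b c -> lee (a + b) c.
Proof. by rewrite /lee => h1 h2; rewrite -addrA h2 h1. Qed.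

Lemma leeD a b c d : lee a c -> lee b d -> lee (a + b) (c + d).
Proof.
move=> h1 h2; apply: leeD_lub.
  exact: lee_trans h1 (leeDl _ _).
exact: lee_trans h2 (leeDr _ _).
Qed.

Lemma leeMl a b c : lee a b -> lee (c * a) (c * b).
Proof. by rewrite /lee => h; rewrite -mulrDr h. Qed.

Lemma leeMr a b c : lee a b -> lee (a * c) (b * c).
Proof. by rewrite /lee => h; rewrite -mulrDl h. Qed.

Lemma leeM a b c d : lee a c -> lee b d -> lee (a * b) (c * d).
Proof. by move=> h1 h2; apply: lee_trans (leeMr _ h1) (leeMl _ h2). Qed.

Lemma lee_sum (I : Type) (r : seq I) (P : pred I) (F G : I -> S) :
  (forall i, P i -> lee (F i) (G i)) ->
  lee (\sum_(i <- r | P i) F i) (\sum_(i <- r | P i) G i).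
Proof.
move=> h; elim: r => [|i r ih]; first by rewrite !big_nil; apply: lee_refl.
by rewrite !big_cons; case: ifP => Pi //; apply: leeD (h _ Pi) ih.
Qed.

Lemma sum_lee (I : Type) (r : seq I) (P : pred I) (F : I -> S) c :
  (forall i, P i -> lee (F i) c) -> lee (\sum_(i <- r | P i) F i) c.
Proof.
move=> h; elim: r => [|i r ih]; first by rewrite big_nil; apply: lee0.
by rewrite big_cons; case: ifP => Pi //; apply: leeD_lub (h _ Pi) ih.
Qed.

Lemma sum_const_lee (I : Type) (r : seq I) (c : S) : lee (\sum_(i <- r) c) c.
Proof. by apply: sum_lee => _ _; apply: lee_refl. Qed.

Lemma lee_sum_term (I : eqType) (r : seq I) (F : I -> S) i :
  i \in r -> lee (F i) (\sum_(j <- r) F j).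
Proof.
elim: r => [//|j r ih]; rewrite inE big_cons => /orP [/eqP->|/ih h].
  exact: leeDl.
exact: lee_trans h (leeDr _ _).
Qed.

Lemma lee_sum_ord n (F : 'I_n -> S) i : lee (F i) (\sum_(j < n) F j).
Proof. by apply: lee_sum_term; rewrite mem_index_enum. Qed.

Definition chain (u : nat -> S) := forall i, lee (u i) (u i.+1).

Lemma chain_mono u : chain u -> forall i j, (i <= j)%N -> lee (u i) (u j).
Proof.
move=> hc i j /subnK <-; elim: (j - i)%N => [|k ih]; first exact: lee_refl.
by rewrite addSn; apply: lee_trans ih (hc _).
Qed.

Lemma sum_chain u n : chain u -> \sum_(k < n.+1) u k = u n.
Proof.
move=> hc; elim: n => [|n ih]; first by rewrite big_ord1.
by rewrite big_ord_recr /= ih; apply: hc.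
Qed.

Definition lub (u : nat -> S) s :=
  (forall i, lee (u i) s) /\ (forall t, (forall i, lee (u i) t) -> lee s t).

Lemma is_lubP u s : is_lub u s <-> lub u s.
Proof.
split=> -[h1 h2]; split=> [i|t ht]; apply/nleP; auto.
- by apply: h2 => i; apply/nleP.
- by apply: h2 => i; apply/nleP.
Qed.

Lemma lub_unique u s1 s2 : lub u s1 -> lub u s2 -> s1 = s2.
Proof. by case=> a1 b1 [a2 b2]; apply: lee_anti; [apply: b1|apply: b2]. Qed.

Lemma eq_lub u v s : u =1 v -> lub u s -> lub v s.
Proof. by move=> /functional_extensionality ->. Qed.

Lemma lub_shift u s : chain u -> lub u s -> lub (fun i => u i.+1) s.
Proof.
move=> hc [h1 h2]; split=> [i|t ht]; first exact: h1.
by apply: h2 => i; apply: lee_trans (hc i) (ht i).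
Qed.

Lemma lubD u v su sv : lub u su -> lub v sv -> lub (fun i => u i + v i) (su + sv).
Proof.
move=> [u1 u2] [v1 v2]; split=> [i|t ht]; first exact: leeD.
apply: leeD_lub.
  by apply: u2 => i; apply: lee_trans (ht i); apply: leeDl.
by apply: v2 => i; apply: lee_trans (ht i); apply: leeDr.
Qed.

Lemma lub_cst (c : S) : lub (fun _ => c) c.
Proof. by split=> [i|t ht]; [apply: lee_refl|apply: ht 0%N]. Qed.

Hypothesis oc : omega_continuous S.

Lemma sup_lub u : chain u -> lub u (sup u).
Proof.
move=> hc; case: oc => _ hch _ _ _.
have [s hs] : exists s, is_lub u s by apply: hch => i; apply/nleP.
by apply/is_lubP; apply: epsilon_spec; exists s.
Qed.

Lemma csum_lub (u : nat -> S) : lub u (csum u).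
Proof.
have hc : chain (fun i => \sum_(k < i.+1) u k).
  by move=> i; rewrite [X in lee _ X]big_ord_recr /=; apply: leeDl.
have [h1 h2] := sup_lub hc; split=> [i|t ht].
  exact: lee_trans (lee_sum_ord (fun j : 'I_i.+1 => u j) ord_max) (h1 i).
by apply: h2 => i; apply: sum_lee.
Qed.

(* Distributivity of countable sums turns su * sv into a double supremum,
   which the diagonal (maxn j k) dominates. *)
Lemma lubM u v su sv : chain u -> chain v -> lub u su -> lub v sv ->
  lub (fun i => u i * v i) (su * sv).
Proof.
move=> cu cv lu lv; case: oc => _ _ csumMl csumMr _.
have <- : csum u = su by apply: lub_unique (csum_lub u) lu.
have <- : csum v = sv by apply: lub_unique (csum_lub v) lv.
split=> [i|t ht].
  by apply: leeM; [apply: (csum_lub u).1|apply: (csum_lub v).1].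
rewrite csumMl; apply: (csum_lub _).2 => k.
rewrite csumMr; apply: (csum_lub _).2 => j.
apply: lee_trans (ht (maxn j k)).
by apply: leeM; apply: chain_mono => //; [exact: leq_maxl|exact: leq_maxr].
Qed.

Section Evaluation.
Variable X : Type.
Implicit Types (m : smonomial S X) (q : spoly S X) (v w : X -> S).

Definition vlee v w := forall z, lee (v z) (w z).

Lemma meval_cat m1 m2 v : meval (m1 ++ m2) v = meval m1 v * meval m2 v.
Proof. by elim: m1 => [|l m ih] /=; rewrite ?mul1r // ih mulrA. Qed.

Lemma peval_cons m q v : peval (m :: q) v = meval m v + peval q v.
Proof. exact: big_cons. Qed.

Lemma peval_cat q1 q2 v : peval (q1 ++ q2) v = peval q1 v + peval q2 v.
Proof. exact: big_cat. Qed.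

Lemma peval_map_cons l q v :
  peval [seq l :: m | m <- q] v = leval l v * peval q v.
Proof. by rewrite /peval big_map mulr_sumr. Qed.

Lemma peval_pvar x v : peval (pvar S x) v = v x.
Proof. by rewrite /pvar peval_cons /peval big_nil addr0 /= mulr1. Qed.

Lemma meval_var0 m : has (@is_var S X) m -> meval m (fun _ => 0) = 0.
Proof.
elim: m => [//|[c|z] m ih] /=; last by rewrite mul0r.
by move=> /ih ->; rewrite mulr0.
Qed.

Lemma peval_var0 q : all (fun m => has (@is_var S X) m) q -> peval q (fun _ => 0) = 0.
Proof.
elim: q => [|m q ih] /=; first by rewrite /peval big_nil.
by move=> /andP [hm hq]; rewrite peval_cons meval_var0 // add0r ih.
Qed.

Lemma meval_mono m v w : vlee v w -> lee (meval m v) (meval m w).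
Proof.
move=> h; elim: m => [|[c|z] m ih] /=; first exact: lee_refl.
  by apply: leeM ih; apply: lee_refl.
by apply: leeM ih; apply: h.
Qed.

Lemma peval_mono q v w : vlee v w -> lee (peval q v) (peval q w).
Proof. by move=> h; apply: lee_sum => m _; apply: meval_mono. Qed.

Variables (u : nat -> X -> S) (s : X -> S).
Hypotheses (u_chain : forall k, vlee (u k) (u k.+1))
           (u_lub : forall z, lub (fun k => u k z) (s z)).

Lemma meval_continuous m : lub (fun k => meval m (u k)) (meval m s).
Proof.
elim: m => [|l m ih] /=; first exact: lub_cst.
apply: lubM => // [k||].
- by case: l => [c|z] /=; [apply: lee_refl|apply: u_chain].
- by move=> k; apply: meval_mono.
- by case: l => [c|z] /=; [apply: lub_cst|apply: u_lub].
Qed.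

Lemma peval_continuous q : lub (fun k => peval q (u k)) (peval q s).
Proof.
elim: q => [|m q ih].
  by rewrite /peval big_nil; apply: eq_lub (lub_cst 0) => k; rewrite big_nil.
rewrite peval_cons; apply: eq_lub (lubD (meval_continuous m) ih) => k.
by rewrite peval_cons.
Qed.

End Evaluation.

Section Differential.
Variable X : eqType.
Implicit Types (m : smonomial S X) (h g : spoly S X) (v : X -> S) (y : X).

(* D_y q|_v (w) only depends on w y, so we evaluate it at a constant vector. *)
Definition dmon y v m (c : S) := Dmon y v m (fun _ => c).
Definition dpoly y v h (c : S) := Dypoly y v h (fun _ => c).

Lemma Dmon_dmon y v m w : Dmon y v m w = dmon y v m (w y).
Proof. by elim: m => [|l m ih] //=; rewrite ih. Qed.

Lemma Dypoly_dpoly y v h w : Dypoly y v h w = dpoly y v h (w y).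
Proof. by apply: eq_bigr => m _; rewrite !Dmon_dmon. Qed.

Lemma dmonD y v m c1 c2 : dmon y v m (c1 + c2) = dmon y v m c1 + dmon y v m c2.
Proof.
rewrite /dmon; elim: m => [|[c|z] m ih] /=; first by rewrite addr0.
  by rewrite ih mulrDr !mul0r !add0r.
rewrite ih mulrDr; case: (z == y); last by rewrite !mul0r !add0r.
by rewrite mulrDl addrACA.
Qed.

Lemma dmon0 y v m : dmon y v m 0 = 0.
Proof.
rewrite /dmon; elim: m => [|[c|z] m ih] //=; rewrite ih mulr0 addr0 ?mul0r //.
by case: (z == y); rewrite mul0r.
Qed.

Lemma dpoly_cons y v m h c : dpoly y v (m :: h) c = dmon y v m c + dpoly y v h c.
Proof. exact: big_cons. Qed.

Lemma dpolyD y v h c1 c2 : dpoly y v h (c1 + c2) = dpoly y v h c1 + dpoly y v h c2.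
Proof. by rewrite /dpoly /Dypoly -big_split; apply: eq_bigr => m _; apply: dmonD. Qed.

Lemma dpoly_sum y v h (I : Type) (r : seq I) (P : pred I) (F : I -> S) :
  dpoly y v h (\sum_(i <- r | P i) F i) = \sum_(i <- r | P i) dpoly y v h (F i).
Proof.
apply: (big_morph (dpoly y v h)) => [c1 c2|]; first exact: dpolyD.
by apply: big1 => m _; apply: dmon0.
Qed.

Lemma dpoly_mono y v h c1 c2 : lee c1 c2 -> lee (dpoly y v h c1) (dpoly y v h c2).
Proof. by rewrite /lee => e; rewrite -dpolyD e. Qed.

Lemma repl_mon_sum m y g v :
  \sum_(q <- repl_mon m y g) peval q v = dmon y v m (peval g v).
Proof.
rewrite /dmon; elim: m => [|l m ih] /=; first by rewrite big_nil.
rewrite big_cat big_map /=.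
under [X in _ + X = _]eq_bigr do rewrite peval_map_cons.
rewrite -mulr_sumr ih; congr (_ + _).
case: l => [c|z] /=; first by rewrite big_nil mul0r.
case: eqP => _; last by rewrite big_nil mul0r.
rewrite big_cons big_nil addr0 /peval big_map mulr_suml.
by apply: eq_bigr => m' _; rewrite meval_cat.
Qed.

Lemma dpoly_le_repl_poly h y g v :
  lee (dpoly y v h (peval g v)) (\sum_(q <- repl_poly h y g) peval q v).
Proof.
elim: h => [|m h ih] /=; first by rewrite /dpoly /Dypoly !big_nil; apply: lee_refl.
rewrite dpoly_cons big_cat !big_map; apply: leeD.
  by rewrite -repl_mon_sum; apply: lee_sum => q _; rewrite peval_cat; apply: leeDl.
apply: lee_trans ih _; apply: lee_sum => q _; rewrite peval_cons; exact: leeDr.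
Qed.

(* An instance rewrites one monomial of h and keeps the others, which
   contribute at most h(v). *)
Lemma repl_poly_le_dpoly h y g v :
  lee (\sum_(q <- repl_poly h y g) peval q v) (dpoly y v h (peval g v) + peval h v).
Proof.
elim: h => [|m h ih] /=; first by rewrite big_nil; apply: lee0.
rewrite dpoly_cons peval_cons big_cat /= !big_map.
under eq_bigr do rewrite peval_cat.
under [X in _ + X]eq_bigr do rewrite peval_cons.
rewrite !big_split /= repl_mon_sum.
have e1 := sum_const_lee (repl_mon m y g) (peval h v).
have e2 := sum_const_lee (repl_poly h y g) (meval m v).
set A := dmon _ _ _ _; set B := dpoly _ _ _ _; set C := meval m v; set D := peval h v.
apply: leeD_lub; apply: leeD_lub.
- exact: lee_trans (leeDl A B) (leeDl _ _).
- exact: lee_trans e1 (lee_trans (leeDr C D) (leeDr _ _)).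
- exact: lee_trans e2 (lee_trans (leeDl C D) (leeDr _ _)).
- exact: lee_trans ih (leeD (leeDr A B) (leeDr C D)).
Qed.

Lemma dmon_self_le y v m : lee (dmon y v m (v y)) (meval m v).
Proof.
rewrite /dmon; elim: m => [|l m ih] /=; first exact: lee0.
apply: leeD_lub; last exact: leeMl.
apply: leeMr; case: l => [c|z] /=; first exact: lee0.
by case: eqP => [->|_]; [apply: lee_refl|apply: lee0].
Qed.

Lemma dpoly_self_le y v h : lee (dpoly y v h (v y)) (peval h v).
Proof. by apply: lee_sum => m _; apply: dmon_self_le. Qed.

Lemma meval_le_dmon m v :
  has (@is_var S X) m -> exists z, lee (meval m v) (dmon z v m (v z)).
Proof.
rewrite /dmon; elim: m => [//|[c|z] m ih] /=.
  by move=> /ih [z hz]; exists z; rewrite mul0r add0r; apply: leeMl.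
by move=> _; exists z; rewrite eqxx; apply: leeDl.
Qed.

End Differential.

Lemma peval_le_sum_dpoly (X : finType) (h : spoly S X) v :
  all (fun m => has (@is_var S X) m) h ->
  lee (peval h v) (\sum_(y : X) dpoly y v h (v y)).
Proof.
rewrite /dpoly /Dypoly exchange_big /=.
elim: h => [|m h ih] /=; first by rewrite /peval !big_nil => _; apply: lee0.
move=> /andP [hm hh]; rewrite peval_cons big_cons; apply: leeD (ih hh).
have [z hz] := meval_le_dmon v hm.
apply: lee_trans hz _.
exact: (lee_sum_term (fun y => dmon y v m (v y)) (mem_index_enum z)).
Qed.

Section NewtonStep.
Variables (X : finType) (f : X -> spoly S X) (a : X -> S).
Hypothesis f_nonconst : forall x, all (fun m => has (@is_var S X) m) (f x).
Local Notation p := (psys f a).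
Implicit Types (v w : X -> S) (x : X).

Lemma Dvec_psys v x w : Dvec p v x w = \sum_(y : X) dpoly y v (f x) (w y).
Proof.
apply: eq_bigr => y _.
by rewrite Dypoly_dpoly dpoly_cons /dmon /= mul0r mulr0 !add0r.
Qed.

Definition lin_comp_sum k v x := \sum_(g <- lin_comp f k x) peval g v.
Definition Dstar_partial k v x := \sum_(i < k.+1) Dpow p v i x v.

Lemma lin_comp_sum_succ k v x : lin_comp_sum k.+1 v x = v x +
  \sum_(y : X) \sum_(g <- lin_comp f k y) \sum_(q <- repl_poly (f x) y g) peval q v.
Proof.
rewrite /lin_comp_sum /= big_cons peval_pvar big_flatten big_map big_enum /=.
by congr (_ + _); apply: eq_bigr => y _; rewrite big_flatten big_map.
Qed.

Lemma Dstar_partial_succ k v x :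
  Dstar_partial k.+1 v x = v x + \sum_(y : X) dpoly y v (f x) (Dstar_partial k v y).
Proof.
rewrite /Dstar_partial big_ord_recl /=; congr (_ + _).
under eq_bigr do rewrite Dvec_psys.
by rewrite exchange_big /=; apply: eq_bigr => y _; rewrite dpoly_sum.
Qed.

Lemma Dstar_partial_chain v x : chain (fun k => Dstar_partial k v x).
Proof. by move=> k; rewrite /Dstar_partial [X in lee _ X]big_ord_recr; apply: leeDl. Qed.

Lemma Dstar_partial_ge k v x : lee (v x) (Dstar_partial k v x).
Proof.
exact: (lee_sum_ord (fun i : 'I_k.+1 => Dpow p v i x v) ord0).
Qed.

Lemma lin_comp_sum_Dstar_partial k v x : lin_comp_sum k v x = Dstar_partial k v x.
Proof.
elim: k x => [|k ih] x.
  by rewrite /lin_comp_sum /Dstar_partial /= big_ord1 big_seq1 peval_pvar.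
rewrite lin_comp_sum_succ Dstar_partial_succ; congr (_ + _).
set R := \sum_(y : X) _.
have -> : \sum_(y : X) dpoly y v (f x) (Dstar_partial k v y) =
          \sum_(y : X) \sum_(g <- lin_comp f k y) dpoly y v (f x) (peval g v).
  by apply: eq_bigr => y _; rewrite -ih dpoly_sum.
set T := \sum_(y : X) _.
have T_le_R : lee T R.
  by apply: lee_sum => y _; apply: lee_sum => g _; apply: dpoly_le_repl_poly.
have R_le_Tf : lee R (T + peval (f x) v).
  apply: lee_trans (_ : lee _ (\sum_(y : X) \sum_(g <- lin_comp f k y)
                     (dpoly y v (f x) (peval g v) + peval (f x) v))) _.
    by apply: lee_sum => y _; apply: lee_sum => g _; apply: repl_poly_le_dpoly.
  under eq_bigr do rewrite big_split /=.
  rewrite big_split /=; apply: leeD (lee_refl _) _.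
  by apply: sum_lee => y _; apply: sum_const_lee.
have f_le_T : lee (peval (f x) v) T.
  apply: lee_trans (peval_le_sum_dpoly v (f_nonconst x)) _.
  apply: lee_sum => y _; rewrite -dpoly_sum; apply: dpoly_mono.
  by rewrite -/(lin_comp_sum k v y) ih; apply: Dstar_partial_ge.
apply: lee_anti _ T_le_R; apply: lee_trans R_le_Tf _.
exact: leeD_lub (lee_refl _) f_le_T.
Qed.

Lemma fhat_Dstar x v : fhat f x v = Dstar p v x v.
Proof.
rewrite /fhat /Dstar /csum; congr sup; apply: functional_extensionality => n.
rewrite -[RHS]/(Dstar_partial n v x) -(sum_chain n (Dstar_partial_chain v x)).
by apply: eq_bigr => k _; apply: lin_comp_sum_Dstar_partial.
Qed.

Definition Fhat v x := fhat f x v.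

Lemma Mseq_iter n x w : Mseq f n x w = iter (2 ^ n) Fhat w x.
Proof.
elim: n x w => [|n ih] x w //=.
rewrite ih expnS mul2n -addnn iterD; congr (iter _ Fhat _ x).
by apply: functional_extensionality => y; rewrite ih.
Qed.

Lemma Newton_iter k : Newton p k = iter k Fhat a.
Proof.
elim: k => [|k ih] /=; apply: functional_extensionality => x.
  by rewrite peval_cons peval_var0 // addr0 /= mulr1.
by rewrite -ih /Fhat fhat_Dstar.
Qed.

Lemma Fhat_mono v w : vlee v w -> vlee (Fhat v) (Fhat w).
Proof.
move=> h x; apply: (csum_lub _).2 => k.
apply: lee_trans _ ((csum_lub _).1 k).
by apply: lee_sum => g _; apply: peval_mono.
Qed.

Lemma Fhat_infl v : vlee v (Fhat v).
Proof. by move=> x; rewrite /Fhat fhat_Dstar; apply: (csum_lub _).1 0%N. Qed.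

Lemma peval_le_Fhat v x : lee (peval (f x) v) (Fhat v x).
Proof.
rewrite /Fhat fhat_Dstar; apply: lee_trans _ ((csum_lub _).1 1%N).
rewrite /= Dvec_psys; apply: peval_le_sum_dpoly (f_nonconst x).
Qed.

Lemma Fhat_solution_le mu : is_solution p mu -> vlee (Fhat mu) mu.
Proof.
move=> hmu x; rewrite /Fhat fhat_Dstar; apply: (csum_lub _).2 => i.
elim: i x => [|i ih] x /=; first exact: lee_refl.
rewrite Dvec_psys hmu peval_cons; apply: lee_trans (leeDr _ _).
apply: sum_lee => y _; apply: lee_trans (dpoly_self_le y mu (f x)).
exact: dpoly_mono.
Qed.

Lemma iter_Fhat_mono i j v : (i <= j)%N -> vlee (iter i Fhat v) (iter j Fhat v).
Proof.
move=> hij x; apply: (chain_mono (u := fun k => iter k Fhat v x)) hij.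
by move=> k; apply: Fhat_infl.
Qed.

Definition kleene k : X -> S := iter k (fun v y => peval (p y) v) (fun _ => 0).

Lemma kleene_chain k : vlee (kleene k) (kleene k.+1).
Proof.
elim: k => [|k ih] y /=; first exact: lee0.
exact: peval_mono.
Qed.

Lemma kleene_sup_solution : is_solution p (fun y => sup (fun k => kleene k y)).
Proof.
have hs y : lub (fun k => kleene k y) (sup (fun k => kleene k y)).
  by apply: sup_lub => // k; apply: kleene_chain.
move=> y; apply: (lub_unique (u := fun k => kleene k.+1 y)).
  by apply: (lub_shift (u := fun k => kleene k y)) => // k; apply: kleene_chain.
exact: (peval_continuous kleene_chain hs (p y)).
Qed.

Lemma kleene_le_iter b k : vlee a b -> vlee (kleene k) (iter k Fhat b).
Proof.
move=> hab; elim: k => [|k ih] y /=; first exact: lee0.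
rewrite peval_cons /= mulr1; apply: leeD_lub.
  exact: lee_trans (hab y) (iter_Fhat_mono b (leq0n k.+1) y).
exact: lee_trans (peval_mono _ ih) (peval_le_Fhat _ y).
Qed.

Lemma iter_Fhat_lub mu b x : least_solution p mu -> vlee a b -> vlee b mu ->
  lub (fun n => iter (2 ^ n) Fhat b x) (mu x).
Proof.
move=> [hsol hleast] hab hbm; split.
  move=> n; elim: (2 ^ n)%N x => [|j ih] x //=.
  exact: lee_trans (Fhat_mono ih x) (Fhat_solution_le hsol x).
move=> t ht; have /nleP le_mu_sup := hleast _ kleene_sup_solution x.
apply: lee_trans le_mu_sup _.
apply: (sup_lub (fun k => kleene_chain k x)).2 => k.
apply: lee_trans (kleene_le_iter k hab x) (lee_trans _ (ht k)).
exact: iter_Fhat_mono (ltnW (ltn_expl k (isT : (1 < 2)%N))) x.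
Qed.

End NewtonStep.

End IdempotentSemiring.

Theorem theorem9 (S : pzSemiRingType) (X : finType) (f : X -> spoly S X) (a : X -> S)
  (mu : X -> S) :
  idempotent_sr S -> omega_continuous S ->
  (forall x, all (fun m => has (@is_var S X) m) (f x)) ->
  least_solution (psys f a) mu ->
  (forall (n : nat) (x : X), Mseq f n x a = Newton (psys f a) (2 ^ n)%N x) /\
  (forall b : X -> S, vle a b -> vle b mu ->
     forall x : X, is_lub (fun n => Mseq f n x b) (mu x)).
Proof.
move=> idem oc f_nonconst mu_least; split=> [n x|b hab hbm x].
  by rewrite Mseq_iter (Newton_iter idem a f_nonconst).
have vleeP (u v : X -> S) : vle u v -> vlee u v by move=> h y; apply/(nleP idem).
have L := iter_Fhat_lub idem oc f_nonconst x mu_least (vleeP _ _ hab) (vleeP _ _ hbm).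
apply/(is_lubP idem); apply: eq_lub L => n.
exact: esym (Mseq_iter _ _ _ _).
Qed.
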